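(* Let $P=\bigcup_{i=1}^n I_i$, $I_i=[p_{i-1},p_i]$, be a simple closed $n$-gon in $\mathbb{R}^2$ ($n\ge3$, indices modulo $n$). For $1\le i\le n$ let $u_i$ be the unit normal to $\mathrm{aff}\,I_i$ oriented so that for every $b\in\mathrm{relint}\,I_i$ and all sufficiently small $\varepsilon>0$, $b+\varepsilon u_i\in\mathrm{ext}P$ and $b-\varepsilon u_i\in\mathrm{int}P$; put $u_{i,i+1}=u_i+u_{i+1}$. (a) Fix $i$, $1\le i\le n$, let $b\in\mathrm{relint}\,I_i$ and let $u$ be a vector with $\langle u,u_i\rangle>0$. For real $\varepsilon$ put $I^\varepsilon=[b+\varepsilon u,\ p_i+\varepsilon u_{i,i+1}]$. Then for every sufficiently small $\varepsilon>0$ (how small may depend on $b$ and $u$), $I^\varepsilon\subset\mathrm{ext}P$ and $I^{-\varepsilon}\subset\mathrm{int}P$. (b) Fix $i$, $1\le i\le n$, and for real $\varepsilon$ put $J^\varepsilon=[p_i+\varepsilon u_{i,i+1},\ p_{i+1}+\varepsilon u_{i+1,i+2}]$. Then for every sufficiently small $\varepsilon>0$, $J^\varepsilon\subset\mathrm{ext}P$ and $J^{-\varepsilon}\subset\mathrm{int}P$.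
   Context: A simple closed $n$-gon is a polygon $P=\bigcup_{i=1}^n[p_{i-1},p_i]$ with $n$ distinct vertices, $p_n=p_0$, whose edges intersect only in the common endpoints of consecutive edges. $\mathbb{R}^2\setminus P$ has exactly two components: the bounded one $\mathrm{int}P$ and the unbounded one $\mathrm{ext}P$. $[x,y]$ denotes the closed segment, $\mathrm{relint}$ relative interior, $\mathrm{aff}$ affine hull. *)

From HB Require Import structures.
From mathcomp Require Import all_boot all_order all_algebra.
From mathcomp Require Import all_classical all_reals all_analysis.
Set Implicit Arguments. Unset Strict Implicit. Unset Printing Implicit Defensive.
Import Order.TTheory GRing.Theory Num.Theory.
Import numFieldNormedType.Exports.
Local Open Scope classical_set_scope.
Local Open Scope ring_scope.

Section Defs.
Variable R : realType.
Notation V := 'rV[R]_2.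

Definition dot (u v : V) : R := \sum_(k < 2) u ord0 k * v ord0 k.

Definition segment (x y : V) : set V :=
  [set z | exists t : R, 0 <= t <= 1 /\ z = (1 - t) *: x + t *: y].

Definition relint_segment (x y : V) : set V :=
  [set z | exists t : R, 0 < t < 1 /\ z = (1 - t) *: x + t *: y].

Definition polygon (n : nat) (p : nat -> V) : set V :=
  \bigcup_(i in [set i : nat | (1 <= i <= n)%N]) segment (p i.-1) (p i).

Definition simple_closed_polygon (n : nat) (p : nat -> V) : Prop :=
  [/\ (3 <= n)%N,
      (forall k, p (k + n)%N = p k),
      (forall i j, (i < n)%N -> (j < n)%N -> p i = p j -> i = j) &
      (forall i j, (1 <= i <= n)%N -> (1 <= j <= n)%N -> (i < j)%N ->
         segment (p i.-1) (p i) `&` segment (p j.-1) (p j) =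
           if j == i.+1 then [set p i]
           else if (i == 1%N) && (j == n) then [set p 0%N]
           else set0)].

Definition poly_int (P : set V) : set V :=
  [set x | ~ P x /\ bounded_set (connected_component (~` P) x)].
Definition poly_ext (P : set V) : set V :=
  [set x | ~ P x /\ ~ bounded_set (connected_component (~` P) x)].

End Defs.

From HB Require Import structures.
From mathcomp Require Import all_boot all_order all_algebra.
From mathcomp Require Import all_classical all_reals all_analysis.
From mathcomp Require Import ring lra zify.
Import Order.TTheory GRing.Theory Num.Theory.
Import numFieldNormedType.Exports.
Local Open Scope classical_set_scope.
Local Open Scope ring_scope.
Set Implicit Arguments. Unset Strict Implicit. Unset Printing Implicit Defensive.

(** At a vertex [B] between edges [[A,B]] and [[B,C]], call unit normals [n1], [n2] coherent
    when they point to the same side of the edges.  As the edges meet only at [B], coherent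
    normals are not opposite, so [w = n1 + n2] has positive components along both.  Hence a
    segment from [x + e a] ([x] in [[A,B)], [a.n1 > 0]) to [B + e w] lies strictly on the
    [n1]-side of the line [AB] and, when [C] is on that side, for small [e] also strictly on
    the [n2]-side of the line [BC]: it misses both edges, and by compactness all other edges.
    Being connected and off [P], it lies in the component of [b + e u_i], which the hypothesis
    puts in ext P (in int P when [u] is replaced by [-u]).  The outward normals are coherent:
    otherwise [u_i] and [-u_(i+1)] would be, and such segments would join a point of ext P to
    a point of int P off [P]. *)

Section PlaneAlgebra.
Variable R : realType.
Notation V := 'rV[R]_2.
Implicit Types (x y z n : V) (a : R).

Definition vx x := x ord0 ord0.
Definition vy x := x ord0 (lift ord0 ord0).

Lemma vxD x y : vx (x + y) = vx x + vx y. Proof. by rewrite /vx mxE. Qed.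
Lemma vyD x y : vy (x + y) = vy x + vy y. Proof. by rewrite /vy mxE. Qed.
Lemma vxN x : vx (- x) = - vx x. Proof. by rewrite /vx mxE. Qed.
Lemma vyN x : vy (- x) = - vy x. Proof. by rewrite /vy mxE. Qed.
Lemma vxZ a x : vx (a *: x) = a * vx x. Proof. by rewrite /vx mxE. Qed.
Lemma vyZ a x : vy (a *: x) = a * vy x. Proof. by rewrite /vy mxE. Qed.
Lemma vx0 : vx 0 = 0. Proof. by rewrite /vx mxE. Qed.
Lemma vy0 : vy 0 = 0. Proof. by rewrite /vy mxE. Qed.
Definition vxyE := (vxD, vyD, vxN, vyN, vxZ, vyZ, vx0, vy0).

Lemma vxyP x y : vx x = vx y -> vy x = vy y -> x = y.
Proof.
move=> ex ey; apply/rowP; case=> -[|[|//]] j2.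
- by rewrite (_ : Ordinal j2 = ord0) //; apply: val_inj.
- by rewrite (_ : Ordinal j2 = lift ord0 ord0) //; apply: val_inj.
Qed.

Lemma dotE x y : dot x y = vx x * vx y + vy x * vy y.
Proof.
rewrite /dot big_ord_recr big_ord1 /vx /vy.
by congr (_ * _ + _ * _); congr (_ _ _); apply: val_inj.
Qed.

(** Clockwise quarter turn; [dot d (rot n)] is the cross product of [d] and [n]. *)
Definition rot x : V := \row_(j < 2) if j == ord0 then vy x else - vx x.

Lemma vx_rot x : vx (rot x) = vy x. Proof. by rewrite /vx mxE. Qed.
Lemma vy_rot x : vy (rot x) = - vx x. Proof. by rewrite /vy mxE. Qed.
End PlaneAlgebra.

Ltac vec_ring := apply: vxyP; rewrite ?dotE ?vx_rot ?vy_rot ?vxyE ?vx_rot ?vy_rot; ring.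
Ltac dot_ring := rewrite !dotE ?vx_rot ?vy_rot ?vxyE ?vx_rot ?vy_rot; ring.

Section Dot.
Variable R : realType.
Notation V := 'rV[R]_2.
Implicit Types (x y z n d : V) (a : R).

Lemma dotC x y : dot x y = dot y x. Proof. dot_ring. Qed.
Lemma dotDl x y z : dot (x + y) z = dot x z + dot y z. Proof. dot_ring. Qed.
Lemma dotDr x y z : dot z (x + y) = dot z x + dot z y. Proof. dot_ring. Qed.
Lemma dotZl a x z : dot (a *: x) z = a * dot x z. Proof. dot_ring. Qed.
Lemma dotZr a x z : dot z (a *: x) = a * dot z x. Proof. dot_ring. Qed.
Lemma dotNl x z : dot (- x) z = - dot x z. Proof. dot_ring. Qed.
Lemma dotNr x z : dot z (- x) = - dot z x. Proof. dot_ring. Qed.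
Lemma dot0l z : dot 0 z = 0. Proof. dot_ring. Qed.
Definition dotLE := (dotDl, dotDr, dotZl, dotZr, dotNl, dotNr, dot0l).

Lemma rotN x : rot (- x) = - rot x. Proof. vec_ring. Qed.
Lemma dot_rotC x y : dot x (rot y) = - dot y (rot x). Proof. dot_ring. Qed.

Lemma orthogonal_decomposition n d :
  dot n n *: d = dot d n *: n + dot d (rot n) *: rot n.
Proof. vec_ring. Qed.
End Dot.

Section UnitNormals.
Variable R : realType.
Notation V := 'rV[R]_2.
Implicit Types (x y n d : V).

Lemma dot_self_ge0 x : 0 <= dot x x.
Proof. by rewrite dotE -!expr2 addr_ge0 ?sqr_ge0. Qed.

Lemma dot_self_eq0 x : dot x x = 0 -> x = 0.
Proof.
rewrite dotE -!expr2 => /eqP; rewrite paddr_eq0 ?sqr_ge0 // !sqrf_eq0.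
by case/andP => /eqP x0 /eqP y0; apply: vxyP; rewrite ?vx0 ?vy0.
Qed.

Definition unit_normal n d := dot n n = 1 /\ dot n d = 0.

(** [n1] and [n2] point to the same side (both left or both right) of [d1] and [d2]. *)
Definition coherent d1 n1 d2 n2 := 0 < dot d1 (rot n1) * dot d2 (rot n2).

Lemma unit_normalN n d : unit_normal n d -> unit_normal (- n) d.
Proof. by case=> n1 nd; split; rewrite ?dotNl ?dotNr ?opprK ?nd ?oppr0. Qed.

Lemma unit_normal_rot n d : unit_normal n d -> d = dot d (rot n) *: rot n.
Proof.
by case=> n1 nd; have := orthogonal_decomposition n d; rewrite n1 scale1r dotC nd scale0r add0r.
Qed.

Lemma unit_normal_rot_neq0 n d : unit_normal n d -> d <> 0 -> dot d (rot n) != 0.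
Proof. by move=> /unit_normal_rot dE d0; apply/eqP => c0; apply: d0; rewrite dE c0 scale0r. Qed.

Lemma unit_normal_dot_swap d1 n1 d2 n2 : unit_normal n1 d1 -> unit_normal n2 d2 ->
  dot d2 (rot n2) * dot d1 n2 = - (dot d1 (rot n1) * dot d2 n1).
Proof.
move=> /unit_normal_rot e1 /unit_normal_rot e2.
have -> : dot d1 n2 = dot d1 (rot n1) * dot n2 (rot n1) by rewrite [in LHS]e1 dotZl (dotC (rot n1)).
have -> : dot d2 n1 = dot d2 (rot n2) * dot n1 (rot n2) by rewrite [in LHS]e2 dotZl (dotC (rot n2)).
by rewrite (dot_rotC n2 n1); ring.
Qed.

Lemma coherent_dot_lt0 d1 n1 d2 n2 : unit_normal n1 d1 -> unit_normal n2 d2 ->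
  coherent d1 n1 d2 n2 -> 0 < dot d2 n1 -> dot d1 n2 < 0.
Proof.
move=> u1 u2; rewrite /coherent => c12 d2n1; have := unit_normal_dot_swap u1 u2.
set c1 := dot d1 (rot n1) in c12 *; set c2 := dot d2 (rot n2) in c12 * => swap.
have : c1 * c2 * dot d1 n2 = - (c1 ^+ 2 * dot d2 n1) by rewrite -mulrA swap; ring.
have : 0 < c1 ^+ 2.
  by rewrite exprn_even_gt0 //; apply/negP => /eqP c10; move: c12; rewrite c10 mul0r ltxx.
nra.
Qed.
End UnitNormals.

Section Segments.
Variable R : realType.
Notation V := 'rV[R]_2.
Implicit Types (x y A B C n : V).

Definition segment_path x y (t : R) : V := (1 - t) *: x + t *: y.

Lemma segment_path_continuous x y : continuous (segment_path x y).
Proof.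
move=> t; apply: cvgD; apply: cvgZr_tmp; last exact: cvg_id.
by apply: cvgB; [exact: cvg_cst | exact: cvg_id].
Qed.

Lemma segment_image x y : segment x y = segment_path x y @` `[0, 1].
Proof.
apply/seteqP; split=> z.
- by case=> t [t01 ->]; exists t => //=; rewrite in_itv.
- by case=> t /= t01 <-; exists t; split => //; rewrite in_itv in t01.
Qed.

Lemma connected_segment x y : connected (segment x y).
Proof.
rewrite segment_image; apply: connected_continuous_connected; first exact: segment_connected.
by apply: continuous_subspaceT => t; exact: segment_path_continuous.
Qed.

Lemma closed_segment x y : closed (segment x y).
Proof.
apply: compact_closed; first exact: norm_hausdorff.
rewrite segment_image; apply: continuous_compact; last exact: segment_compact.
by apply: continuous_subspaceT => t; exact: segment_path_continuous.
Qed.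

Lemma segment_sym x y : segment x y = segment y x.
Proof. by apply/seteqP; split => z [t [t01 ->]]; exists (1 - t); (split; first lra); vec_ring. Qed.

Lemma segment_start x y : segment x y x.
Proof. by exists 0; split; [rewrite lexx ler01 | vec_ring]. Qed.

Lemma segment_end x y : segment x y y.
Proof. by exists 1; split; [rewrite lexx ler01 | vec_ring]. Qed.

Lemma dot_segment x y B n q : segment x y q ->
  exists2 t, 0 <= t <= 1 & dot (q - B) n = (1 - t) * dot (x - B) n + t * dot (y - B) n.
Proof. by case=> t [t01 ->]; exists t => //; rewrite -!dotZl -dotDl; congr dot; vec_ring. Qed.
End Segments.
Arguments connected_segment {R} x y.

Section Perturbation.
Variable R : realType.
Notation V := 'rV[R]_2.

Lemma near_right0P (Q : R -> Prop) :
  (exists d : R, 0 < d /\ forall e, 0 < e < d -> Q e) <-> \forall e \near 0^'+, Q e.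
Proof.
split=> [[d [d0 dQ]]|].
  near=> e; apply: dQ; apply/andP; split; near: e; [exact: nbhs_right_gt | exact: nbhs_right_lt].
move=> /nbhs_ballP [d /= d0 dQ]; exists d; split => // e /andP[e0 ed].
by apply: dQ => //; rewrite /ball /= sub0r normrN gtr0_norm.
Unshelve. all: by end_near.
Qed.

Lemma near_right0_add_gt0 (K c : R) : 0 < K -> \forall e \near 0^'+, 0 < K + e * c.
Proof.
move=> K0; near=> e.
have e0 : 0 < e by near: e; exact: nbhs_right_gt.
have : e * (`|c| + 1) < K.
  rewrite -ltr_pdivlMr ?ltr_pwDr //; near: e.
  by apply: nbhs_right_lt; rewrite divr_gt0 // ltr_pwDr.
have := ler_norm (- c); rewrite normrN; nra.
Unshelve. all: by end_near.
Qed.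

Lemma segment_path_shift (x y a c : V) e t :
  segment_path (x + e *: a) (y + e *: c) t = segment_path x y t + e *: segment_path a c t.
Proof. rewrite /segment_path; vec_ring. Qed.

Lemma segment_path_norm_le (a c : V) t : 0 <= t <= 1 -> `|segment_path a c t| <= `|a| + `|c|.
Proof.
move=> /andP[t0 t1]; rewrite /segment_path (le_trans (ler_normD _ _)) //.
rewrite !normrZ !ger0_norm ?subr_ge0 //.
have := normr_ge0 a; have := normr_ge0 c; nra.
Qed.

Lemma near_avoid_setU (S : R -> set V) (X Y Z : set V) : Z = X \/ Z = Y ->
  (\forall e \near 0^'+, S e `<=` ~` (X `|` Y)) -> \forall e \near 0^'+, S e `<=` ~` Z.
Proof.
by move=> ZXY; apply: filterS => e S_avoid z /S_avoid + Zz; apply; case: ZXY => <-; [left|right].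
Qed.

Lemma shifted_segment_avoid (x y a c : V) (K : set V) : closed K ->
  segment x y `<=` ~` K ->
  \forall e \near 0^'+, segment (x + e *: a) (y + e *: c) `<=` ~` K.
Proof.
move=> clK xyK.
suff : \forall e \near 0^'+, `[0, 1] `<=` [set t | ~ K (segment_path (x + e *: a) (y + e *: c) t)].
  by apply: filterS => e sub z; rewrite segment_image => -[t t01 <-]; exact: sub.
apply: (near_covering_withinP _).2.
  exact: (compact_near_coveringP _).1 (@segment_compact R 0 1).
move=> t0 t01.
have : nbhs (segment_path x y t0) (~` K).
  apply: open_nbhs_nbhs; split; first exact: closed_openC.
  by apply: xyK; rewrite segment_image; exists t0.
move=> /nbhs_ballP [r /= r0 ballK].
have r2 : 0 < r / 2 by rewrite divr_gt0.
near=> t e => /= t01'.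
apply: ballK; rewrite -ball_normE /= segment_path_shift opprD addrA.
apply: (le_lt_trans (ler_normD _ _)); rewrite normrN normrZ.
have e0 : 0 < e by near: e; exact: nbhs_right_gt.
have ac_small : e * (`|a| + `|c| + 1) < r / 2.
  rewrite -ltr_pdivlMr ?ltr_pwDr ?addr_ge0 //; near: e.
  by apply: nbhs_right_lt; rewrite !divr_gt0 ?ltr_pwDr ?addr_ge0.
have : `|segment_path x y t0 - segment_path x y t| < r / 2.
  by near: t; apply: cvgr_dist_lt r2; exact: segment_path_continuous.
have := segment_path_norm_le a c (t01' : 0 <= t <= 1).
rewrite gtr0_norm //; nra.
Unshelve. all: by end_near.
Qed.
End Perturbation.

Section Corners.
Variable R : realType.
Notation V := 'rV[R]_2.
Implicit Types (x y A B C n : V).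

Definition halfplane B n : set V := [set q | 0 < dot (q - B) n].

Lemma segment_sub_halfplane x y B n :
  halfplane B n x -> halfplane B n y -> segment x y `<=` halfplane B n.
Proof.
rewrite /halfplane => hx hy q /(dot_segment B n) [t /andP[t0 t1] /= ->].
have [->|t_lt1] := eqVneq t 1; first by rewrite subrr mul0r add0r mul1r.
by rewrite ltr_pwDl ?mulr_ge0 ?(ltW hy) // mulr_gt0 // subr_gt0 lt_neqAle t_lt1.
Qed.

Lemma segment_sub_line A B n : dot n (B - A) = 0 -> segment A B `<=` [set q | dot (q - B) n = 0].
Proof.
move=> nAB q /(dot_segment B n) [t _ /= ->].
by rewrite subrr dot0l mulr0 addr0 dotC -(opprB B A) dotNr nAB oppr0 mulr0.
Qed.

Lemma segment_sub_nonpos B C n : dot (C - B) n <= 0 -> segment B C `<=` [set q | dot (q - B) n <= 0].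
Proof.
move=> nBC q /(dot_segment B n) [t /andP[t0 _] /= ->].
by rewrite subrr dot0l mulr0 add0r mulr_ge0_le0.
Qed.

Lemma unit_sum_nonpos_opp n1 n2 : dot n1 n1 = 1 -> dot n2 n2 = 1 -> 1 + dot n1 n2 <= 0 ->
  n2 = - n1.
Proof.
move=> n1_1 n2_1 le0; apply/eqP; rewrite -subr_eq0 opprK; apply/eqP/dot_self_eq0/le_anti.
by rewrite dot_self_ge0 andbT !dotLE n1_1 n2_1 (dotC n2); lra.
Qed.

(** The sign condition says that [A] and [C] lie on the same side of [B]. *)
Lemma antiparallel_edges_overlap A B C n : unit_normal n (B - A) -> unit_normal n (C - B) ->
  dot (B - A) (rot n) * dot (C - B) (rot n) < 0 ->
  exists2 q, (segment A B `&` segment B C) q & q <> B.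
Proof.
move=> uAB uBC; set c1 := dot (B - A) (rot n); set c2 := dot (C - B) (rot n) => c12.
have c1_neq0 : c1 != 0 by apply/negP => /eqP c10; move: c12; rewrite c10 mul0r ltxx.
set k := - (c2 / c1).
have k_gt0 : 0 < k.
  have -> : k = - (c1 * c2) / c1 ^+ 2 by rewrite /k; field.
  by rewrite divr_gt0 ?oppr_gt0 // exprn_even_gt0.
have CBk : C - B = k *: (A - B).
  rewrite [LHS](unit_normal_rot uBC) -(opprB B A) [B - A](unit_normal_rot uAB) -/c1 -/c2.
  by rewrite scalerN scalerA /k mulNr scaleNr opprK mulfVK.
set mu := (1 + k)^-1.
have mu_gt0 : 0 < mu by rewrite invr_gt0 addr_gt0.
have mu_lt1 : mu < 1 by rewrite invf_lt1 ?ltrDl // addr_gt0.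
exists ((1 - mu) *: A + mu *: B).
  split; first by exists mu; split => //; rewrite !ltW.
  exists mu; split; first by rewrite !ltW.
  have muk : mu * k = 1 - mu by rewrite /mu; field; rewrite gt_eqF // addr_gt0.
  by rewrite -[C](subrK B) CBk scalerDr scalerA muk; vec_ring.
move=> qB; have : (1 - mu) *: (A - B) = (1 - mu) *: A + mu *: B - B by vec_ring.
rewrite qB subrr => /eqP; rewrite scaler_eq0 subr_eq0 (gt_eqF mu_lt1) /= subr_eq0 => /eqP AB.
by move: c1_neq0; rewrite /c1 AB subrr dot0l eqxx.
Qed.

Lemma corner_unfolded A B C n1 n2 :
  unit_normal n1 (B - A) -> unit_normal n2 (C - B) -> coherent (B - A) n1 (C - B) n2 ->
  segment A B `&` segment B C = [set B] -> 0 < 1 + dot n1 n2.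
Proof.
move=> u1 [n2_1 n2_BC] coh meet; rewrite ltNge; apply/negP => /(unit_sum_nonpos_opp u1.1 n2_1) n2E.
have u2 : unit_normal n1 (C - B).
  by split; [exact: u1.1 | apply/oppr_inj; rewrite -dotNl -n2E n2_BC oppr0].
rewrite n2E /coherent rotN dotNr mulrN oppr_gt0 in coh.
have [q] := antiparallel_edges_overlap u1 u2 coh.
by rewrite meet.
Qed.

Lemma corner_avoid A B C n1 n2 x a :
  unit_normal n1 (B - A) -> unit_normal n2 (C - B) -> coherent (B - A) n1 (C - B) n2 ->
  segment A B `&` segment B C = [set B] -> segment A B x -> x <> B -> 0 < dot a n1 ->
  \forall e \near 0^'+, segment (x + e *: a) (B + e *: (n1 + n2))
     `<=` ~` (segment A B `|` segment B C).
Proof.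
move=> u1 u2 coh meet [lam [/andP[lam0 lam_le1] xE]] xB an1.
have lam1 : lam < 1.
  by rewrite lt_neqAle lam_le1 andbT; apply/eqP => l1; apply: xB; rewrite xE l1; vec_ring.
have unf := corner_unfolded u1 u2 coh meet.
have dot_shift v c e n : dot (v + e *: c - B) n = dot (v - B) n + e * dot c n by dot_ring.
have dot_end e n : dot (B + e *: (n1 + n2) - B) n = e * dot (n1 + n2) n by dot_ring.
have dot_x n : dot (x - B) n = (1 - lam) * dot (A - B) n by rewrite xE; dot_ring.
have AB_line := segment_sub_line u1.2.
have BC_line : segment B C `<=` [set q | dot (q - B) n2 = 0].
  by rewrite segment_sym; apply: segment_sub_line; rewrite -(opprB C B) dotNr u2.2 oppr0.
have x_n1 : dot (x - B) n1 = 0.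
  by rewrite dot_x -(opprB B A) dotNl dotC u1.2 oppr0 mulr0.
have below_n1 e : 0 < e -> segment (x + e *: a) (B + e *: (n1 + n2)) `<=` halfplane B n1.
  move=> e0; apply: segment_sub_halfplane; rewrite /halfplane /=.
  - by rewrite dot_shift x_n1 add0r mulr_gt0.
  - by rewrite dot_end dotDl u1.1 (dotC n2) mulr_gt0.
have [C_n1|C_n1] := leP (dot (C - B) n1) 0.
  near=> e; have e0 : 0 < e by near: e; exact: nbhs_right_gt.
  move=> q /(below_n1 e e0); rewrite /halfplane /= => q_n1.
  by case=> [/AB_line|/(segment_sub_nonpos C_n1)] /=; lra.
have A_n2 : 0 < (1 - lam) * dot (A - B) n2.
  rewrite mulr_gt0 ?subr_gt0 // -opprB dotNl oppr_gt0.
  exact: coherent_dot_lt0 u1 u2 coh C_n1.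
near=> e; have e0 : 0 < e by near: e; exact: nbhs_right_gt.
move=> q hq; have q_n2 : halfplane B n2 q.
  apply: segment_sub_halfplane hq; rewrite /halfplane /=.
  - by rewrite dot_shift dot_x; near: e; exact: near_right0_add_gt0.
  - by rewrite dot_end dotDl u2.1 addrC mulr_gt0.
have q_n1 := below_n1 e e0 q hq.
move: q_n1 q_n2; rewrite /halfplane /= => q_n1 q_n2.
by case=> [/AB_line|/BC_line] /=; lra.
Unshelve. all: by end_near.
Qed.

Lemma corner_avoid_rev A B C n1 n2 y c :
  unit_normal n1 (B - A) -> unit_normal n2 (C - B) -> coherent (B - A) n1 (C - B) n2 ->
  segment A B `&` segment B C = [set B] -> segment B C y -> y <> B -> 0 < dot c n2 ->
  \forall e \near 0^'+, segment (B + e *: (n1 + n2)) (y + e *: c)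
     `<=` ~` (segment A B `|` segment B C).
Proof.
move=> [n1_1 n1_AB] [n2_1 n2_BC] coh meet BCy yB cn2.
have rev_normal n d : dot n d = 0 -> dot n (- d) = 0 by move=> nd; rewrite dotNr nd oppr0.
have := @corner_avoid C B A n2 n1 y c.
rewrite -(opprB C B) -(opprB B A) /coherent !dotNl mulrNN mulrC.
move=> /(_ (conj n2_1 (rev_normal _ _ n2_BC)) (conj n1_1 (rev_normal _ _ n1_AB)) coh).
rewrite (segment_sym C B) (segment_sym B A) setIC meet => /(_ erefl BCy yB cn2).
by apply: filterS => e; rewrite segment_sym (addrC n2) setUC.
Qed.
End Corners.

Section SegmentParam.
Variable R : realType.
Notation V := 'rV[R]_2.
Implicit Types (A B b q : V) (l m : R).

Lemma segment_param_inj A B l m : A <> B -> (1 - l) *: A + l *: B = (1 - m) *: A + m *: B -> l = m.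
Proof.
move=> AB eq.
have : (l - m) *: (B - A) = (1 - l) *: A + l *: B - ((1 - m) *: A + m *: B) by vec_ring.
rewrite eq subrr => /eqP; rewrite scaler_eq0 !subr_eq0 => /orP[/eqP //|/eqP BA].
by case: AB; rewrite BA.
Qed.

Lemma relint_segment_sym A B : relint_segment A B = relint_segment B A.
Proof.
by apply/seteqP; split => q [t [t01 ->]]; exists (1 - t); (split; first lra); vec_ring.
Qed.

Lemma segment_param_start A B m : A <> B -> (1 - m) *: A + m *: B = A -> m = 0.
Proof.
move=> AB; rewrite -{2}[A](_ : (1 - 0) *: A + 0 *: B = A); last by vec_ring.
exact: segment_param_inj.
Qed.

Lemma segment_param_end A B m : A <> B -> (1 - m) *: A + m *: B = B -> m = 1.
Proof.
move=> AB; rewrite -{2}[B](_ : (1 - 1) *: A + 1 *: B = B); last by vec_ring.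
exact: segment_param_inj.
Qed.

Lemma relint_segment_neq A B b : A <> B -> relint_segment A B b -> b <> A /\ b <> B.
Proof.
move=> AB [l [/andP[l0 l1] ->]].
by split => [/(segment_param_start AB)|/(segment_param_end AB)]; lra.
Qed.

Lemma relint_segment_sub A B : relint_segment A B `<=` segment A B.
Proof. by move=> q [l [/andP[l0 l1] ->]]; exists l; split => //; rewrite !ltW. Qed.

Lemma segment_sub_param A B l q : 0 <= l <= 1 -> segment ((1 - l) *: A + l *: B) B q ->
  exists2 m, l <= m <= 1 & q = (1 - m) *: A + m *: B.
Proof.
move=> /andP[l0 l1] [s [/andP[s0 s1] ->]]; exists (1 - (1 - s) * (1 - l)); last by vec_ring.
by apply/andP; split; nra.
Qed.
Lemma midpoint_relint A B : relint_segment A B ((1 - 2^-1) *: A + 2^-1 *: B).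
Proof.
by exists 2^-1; split => //; apply/andP; split; [rewrite invr_gt0 | rewrite invf_lt1 ?ltr1n].
Qed.
End SegmentParam.

Definition succ_mod (n i : nat) := if i == n then 1%N else i.+1.

Lemma succ_mod_range n i : (1 < n)%N -> (1 <= i <= n)%N -> (1 <= succ_mod n i <= n)%N.
Proof. by rewrite /succ_mod; case: eqP => [->|]; lia. Qed.

Lemma succ_mod_periodic (T : Type) (f : nat -> T) n i : (1 <= i <= n)%N ->
  (forall k, f (k + n)%N = f k) -> f (succ_mod n i) = f i.+1.
Proof. by rewrite /succ_mod; case: eqP => [-> _ fn|//]; rewrite -fn add1n. Qed.

Lemma succ_mod2_periodic (T : Type) (f : nat -> T) n i : (1 < n)%N -> (1 <= i <= n)%N ->
  (forall k, f (k + n)%N = f k) -> f (succ_mod n (succ_mod n i)) = f i.+2.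
Proof.
move=> n1 hi fn; rewrite (succ_mod_periodic (f := f) (succ_mod_range n1 hi) fn).
by apply: (succ_mod_periodic (f := fun k => f k.+1)) => // k; rewrite -addSn fn.
Qed.

Section Polygon.
Variable R : realType.
Notation V := 'rV[R]_2.
Variables (n : nat) (p : nat -> V).
Hypothesis hP : simple_closed_polygon n p.

Definition edge k := segment (p k.-1) (p k).
Local Notation succ := (succ_mod n).
Local Notation P := (polygon n p).

Lemma n_ge3 : (3 <= n)%N. Proof. by case: hP. Qed.
Lemma p_periodic k : p (k + n)%N = p k. Proof. by case: hP => _ h _ _; apply: h. Qed.

Lemma succ_range i : (1 <= i <= n)%N -> (1 <= succ i <= n)%N.
Proof. by apply: succ_mod_range; have := n_ge3; lia. Qed.

Lemma p_pred_succ i : (1 <= i <= n)%N -> p (succ i).-1 = p i.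
Proof. by rewrite /succ_mod; case: eqP => [-> _|//] /=; rewrite -(p_periodic 0). Qed.

Lemma edge_succ i : (1 <= i <= n)%N -> edge (succ i) = segment (p i) (p (succ i)).
Proof. by move=> hi; rewrite /edge p_pred_succ. Qed.

Lemma succ_inj i k : (1 <= i <= n)%N -> (1 <= k <= n)%N -> succ i = succ k -> i = k.
Proof. by rewrite /succ_mod; case: eqP; case: eqP; lia. Qed.

Lemma succ_neq i : (1 <= i <= n)%N -> succ i <> i.
Proof. by have := n_ge3; rewrite /succ_mod; case: eqP; lia. Qed.

Lemma succ2_neq i : (1 <= i <= n)%N -> succ (succ i) <> i.
Proof. by have := n_ge3; rewrite /succ_mod; do 2 case: eqP; lia. Qed.

Lemma edge_ends_neq i : (1 <= i <= n)%N -> p i.-1 <> p i.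
Proof.
case: hP => n3 _ inj _ hi; have [->|ni] := eqVneq i n.
  by have := p_periodic 0; rewrite add0n => -> /inj; lia.
by move/inj; lia.
Qed.

Lemma edges_meet i k q : (1 <= i <= n)%N -> (1 <= k <= n)%N -> i <> k -> edge i q -> edge k q ->
  (q = p i /\ k = succ i) \/ (q = p i.-1 /\ i = succ k).
Proof.
case: hP => n3 _ _ simple hi hk ik Ei Ek.
have [lt_ik|lt_ki] : (i < k)%N \/ (k < i)%N by lia.
- have := simple i k hi hk lt_ik; rewrite -/(edge i) -/(edge k) => meet.
  have : (edge i `&` edge k) q by [].
  rewrite meet /succ_mod; case: eqP => [-> /= ->|_].
    by left; split => //; case: eqP => // i_n; lia.
  case: andP => [[/eqP i1 /eqP kn] /= ->|//]; right.
  by rewrite i1 kn eqxx.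
- have := simple k i hk hi lt_ki; rewrite -/(edge i) -/(edge k) => meet.
  have : (edge k `&` edge i) q by [].
  rewrite meet /succ_mod; case: eqP => [-> /= ->|_].
    by right; split => //; case: eqP => // kn; lia.
  case: andP => [[/eqP k1 /eqP iin] /= ->|//]; left.
  by rewrite iin k1 eqxx -(p_periodic 0).
Qed.

Lemma edge_meet_succ i : (1 <= i <= n)%N -> edge i `&` edge (succ i) = [set p i].
Proof.
move=> hi; have hj := succ_range hi; apply/seteqP; split => q.
- move=> [Ei Ej]; have [[-> _] //|[_ i_succ]] := edges_meet hi hj (nesym (succ_neq hi)) Ei Ej.
  by case: (succ2_neq hi); rewrite -i_succ.
- by move=> /= ->; split; [exact: segment_end | rewrite edge_succ //; exact: segment_start].
Qed.

Lemma relint_not_edge i k b : (1 <= i <= n)%N -> (1 <= k <= n)%N -> k <> i ->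
  relint_segment (p i.-1) (p i) b -> ~ edge k b.
Proof.
move=> hi hk ki hb Ek; have Ei : edge i b by exact: relint_segment_sub.
have [b_pi b_pi1] := relint_segment_neq (edge_ends_neq hi) hb.
by case: (edges_meet hi hk (nesym ki) Ei Ek) => -[].
Qed.

Lemma polygon_avoid (S : R -> set V) :
  (forall k, (1 <= k <= n)%N -> \forall e \near 0^'+, S e `<=` ~` edge k) ->
  \forall e \near 0^'+, S e `<=` ~` P.
Proof.
move=> avoid_edges.
have : \forall e \near 0^'+, forall k : 'I_n.+1, (1 <= k)%N -> S e `<=` ~` edge k.
  apply: filter_forall => k; have [k0|k_gt0] := posnP k.
    by apply: nearW => e; rewrite k0.
  have hk : (1 <= k <= n)%N by rewrite k_gt0 -ltnS ltn_ord.
  by apply: filterS (avoid_edges k hk) => e Sk _.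
apply: filterS => e Sk z Sz [k /andP[k1 kn] Ek].
by apply: (Sk (Ordinal (leq_ltn_trans kn (ltnSn n))) k1 z Sz Ek).
Qed.

Lemma relint_end_avoid i k b : (1 <= i <= n)%N -> (1 <= k <= n)%N -> k <> i -> k <> succ i ->
  relint_segment (p i.-1) (p i) b -> segment b (p i) `<=` ~` edge k.
Proof.
move=> hi hk ki k_succ [l [/andP[l0 l1] ->]] q /segment_sub_param.
case=> [|m /andP[lm m1] ->]; first by rewrite !ltW.
have Ei : edge i ((1 - m) *: p i.-1 + m *: p i) by exists m; split => //; rewrite (le_trans (ltW l0)).
move=> Ek; case: (edges_meet hi hk (nesym ki) Ei Ek) => -[q_end k_eq] //.
by move: q_end => /(segment_param_start (edge_ends_neq hi)); lra.
Qed.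

Lemma relint_start_avoid i k b : (1 <= i <= n)%N -> (1 <= k <= n)%N -> k <> i -> i <> succ k ->
  relint_segment (p i.-1) (p i) b -> segment (p i.-1) b `<=` ~` edge k.
Proof.
move=> hi hk ki i_succ; rewrite relint_segment_sym segment_sym => -[l [/andP[l0 l1] ->]] q.
move=> /segment_sub_param; case=> [|m /andP[lm m1] ->]; first by rewrite !ltW.
have Ei : edge i ((1 - m) *: p i + m *: p i.-1).
  by rewrite /edge segment_sym; exists m; split => //; rewrite (le_trans (ltW l0)).
move=> Ek; case: (edges_meet hi hk (nesym ki) Ei Ek) => -[q_end i_eq] //.
by move: q_end => /(segment_param_start (nesym (edge_ends_neq hi))); lra.
Qed.

Section Vertex.
Variables (i : nat) (n1 n2 : V).
Hypothesis hi : (1 <= i <= n)%N.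
Hypotheses (u1 : unit_normal n1 (p i - p i.-1)) (u2 : unit_normal n2 (p (succ i) - p i)).
Hypothesis coh : coherent (p i - p i.-1) n1 (p (succ i) - p i) n2.

Let corner_meet : segment (p i.-1) (p i) `&` segment (p i) (p (succ i)) = [set p i].
Proof. by rewrite -edge_succ //; exact: edge_meet_succ. Qed.

Lemma corner_unfolded_at : 0 < 1 + dot n1 n2.
Proof. exact: corner_unfolded u1 u2 coh corner_meet. Qed.

Lemma incoming_segment_avoid b a : relint_segment (p i.-1) (p i) b -> 0 < dot a n1 ->
  \forall e \near 0^'+, segment (b + e *: a) (p i + e *: (n1 + n2)) `<=` ~` P.
Proof.
move=> hb an; apply: polygon_avoid => k hk.
have corner : \forall e \near 0^'+, segment (b + e *: a) (p i + e *: (n1 + n2))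
    `<=` ~` (edge i `|` edge (succ i)).
  rewrite edge_succ //; apply: corner_avoid u1 u2 coh corner_meet _ _ an.
  - exact: relint_segment_sub.
  - by have [] := relint_segment_neq (edge_ends_neq hi) hb.
have [ki|ki] := eqVneq k i; first by apply: near_avoid_setU corner; left; rewrite ki.
have [kj|kj] := eqVneq k (succ i).
  by apply: near_avoid_setU corner; right; rewrite kj edge_succ.
apply: shifted_segment_avoid; first exact: closed_segment.
exact: relint_end_avoid hi hk (elimN eqP ki) (elimN eqP kj) hb.
Qed.

Lemma outgoing_segment_avoid b c : relint_segment (p i) (p (succ i)) b -> 0 < dot c n2 ->
  \forall e \near 0^'+, segment (p i + e *: (n1 + n2)) (b + e *: c) `<=` ~` P.
Proof.
move=> hb cn; apply: polygon_avoid => k hk.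
have corner : \forall e \near 0^'+, segment (p i + e *: (n1 + n2)) (b + e *: c)
    `<=` ~` (edge i `|` edge (succ i)).
  rewrite edge_succ //; apply: corner_avoid_rev u1 u2 coh corner_meet _ _ cn.
  - exact: relint_segment_sub.
  - have := edge_ends_neq (succ_range hi); rewrite p_pred_succ // => ij.
    by have [] := relint_segment_neq ij hb.
have [ki|ki] := eqVneq k i; first by apply: near_avoid_setU corner; left; rewrite ki.
have [kj|kj] := eqVneq k (succ i).
  by apply: near_avoid_setU corner; right; rewrite kj edge_succ.
apply: shifted_segment_avoid; first exact: closed_segment.
have hj := succ_range hi.
rewrite -(p_pred_succ hi) in hb *.
apply: (relint_start_avoid hj hk (elimN eqP kj) _ hb).
by move=> /(succ_inj hi hk) ik; rewrite ik eqxx in ki.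
Qed.
End Vertex.

Definition normal_at (nn : nat -> V) k := unit_normal (nn k) (p k - p k.-1).
Definition coherent_at (nn : nat -> V) i :=
  coherent (p i - p i.-1) (nn i) (p (succ i) - p i) (nn (succ i)).

Lemma normal_atN nn k : normal_at nn k -> normal_at (fun k => - nn k) k.
Proof. exact: unit_normalN. Qed.

Lemma coherent_atN nn i : coherent_at nn i -> coherent_at (fun k => - nn k) i.
Proof. by rewrite /coherent_at /coherent !rotN !dotNr mulrNN. Qed.

Lemma normal_at_succ nn i : (1 <= i <= n)%N ->
  normal_at nn (succ i) -> unit_normal (nn (succ i)) (p (succ i) - p i).
Proof. by move=> hi; rewrite /normal_at p_pred_succ. Qed.

Lemma coherent_at_unfolded nn i : (1 <= i <= n)%N ->
  normal_at nn i -> normal_at nn (succ i) -> coherent_at nn i -> 0 < 1 + dot (nn i) (nn (succ i)).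
Proof. by move=> hi ni /(normal_at_succ hi) nj; exact: corner_unfolded_at. Qed.

Lemma shifted_edge_avoid nn i : (1 <= i <= n)%N ->
  normal_at nn i -> normal_at nn (succ i) -> normal_at nn (succ (succ i)) ->
  coherent_at nn i -> coherent_at nn (succ i) ->
  \forall e \near 0^'+, segment (p i + e *: (nn i + nn (succ i)))
                         (p (succ i) + e *: (nn (succ i) + nn (succ (succ i)))) `<=` ~` P.
Proof.
move=> hi ni nj nl ci cj; have hj := succ_range hi; have hl := succ_range hj.
have unf_i := coherent_at_unfolded hi ni nj ci; have unf_j := coherent_at_unfolded hj nj nl cj.
have meet_i := edge_meet_succ hi; have meet_j := edge_meet_succ hj.
have pj := p_pred_succ hi; have pl := p_pred_succ hj.
have ij : p i <> p (succ i) by rewrite -pj; exact: edge_ends_neq.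
set j := succ i in hj nj nl ci cj unf_i unf_j meet_i meet_j pj pl ij *.
set l := succ j in hl nl cj unf_j meet_j pl *.
rewrite /normal_at pl in nl; rewrite /normal_at pj in nj; rewrite /coherent_at pj in cj.
rewrite /edge pj pl in meet_i meet_j.
have corner_i : \forall e \near 0^'+, segment (p i + e *: (nn i + nn j)) (p j + e *: (nn j + nn l))
    `<=` ~` (edge i `|` edge j).
  rewrite /edge pj; apply: (corner_avoid_rev ni nj ci meet_i (segment_end _ _) (nesym ij)).
  by rewrite dotDl nj.1 (dotC (nn l)).
have corner_j : \forall e \near 0^'+, segment (p i + e *: (nn i + nn j)) (p j + e *: (nn j + nn l))
    `<=` ~` (edge j `|` edge l).
  rewrite /edge pj pl; apply: (corner_avoid nj nl cj meet_j (segment_start _ _) ij).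
  by rewrite dotDl nj.1 addrC.
apply: polygon_avoid => k hk.
have [ki|ki] := eqVneq k i; first by apply: near_avoid_setU corner_i; left; rewrite ki.
have [kj|kj] := eqVneq k j; first by apply: near_avoid_setU corner_i; right; rewrite kj.
have [kl|kl] := eqVneq k l; first by apply: near_avoid_setU corner_j; right; rewrite kl.
apply: shifted_segment_avoid; first exact: closed_segment.
rewrite -pj => q Ej Ek; case: (edges_meet hj hk (nesym (elimN eqP kj)) Ej Ek) => -[_].
  by move/eqP: kl.
by move/(succ_inj hi hk) => ik; rewrite ik eqxx in ki.
Qed.
End Polygon.

Section Sides.
Variable R : realType.
Notation V := 'rV[R]_2.
Variable P : set V.

Definition side (Q : set V -> Prop) : set V :=
  [set x | ~ P x /\ Q (connected_component (~` P) x)].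

Lemma connected_sub_side Q (S : set V) x : connected S -> S `<=` ~` P -> S x ->
  side Q x -> S `<=` side Q.
Proof.
move=> cS SP Sx [_ Qx] y Sy; split; first exact: SP.
have Cx := connected_component_max Sx SP cS.
by rewrite -(same_connected_component (Cx y Sy)).
Qed.
End Sides.

Section PolygonSides.
Variable R : realType.
Notation V := 'rV[R]_2.
Variables (n : nat) (p : nat -> V) (nn : nat -> V) (Q : set V -> Prop).
Hypothesis hP : simple_closed_polygon n p.
Hypothesis normal : forall k, (1 <= k <= n)%N -> normal_at p nn k.
Hypothesis near_edge_side : forall k, (1 <= k <= n)%N ->
  forall b, relint_segment (p k.-1) (p k) b ->
  \forall e \near 0^'+, side (polygon n p) Q (b + e *: nn k).
Local Notation P := (polygon n p).
Local Notation succ := (succ_mod n).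

Lemma normal_segment_avoid k b v : (1 <= k <= n)%N -> relint_segment (p k.-1) (p k) b ->
  0 < dot v (nn k) -> \forall e \near 0^'+, segment (b + e *: v) (b + e *: nn k) `<=` ~` P.
Proof.
move=> hk hb vn; have [n_1 n_k] := normal hk.
apply: (@polygon_avoid _ n p (fun e => segment (b + e *: v) (b + e *: nn k))) => k' hk'.
have [->|k'k] := eqVneq k' k.
  near=> e; have e0 : 0 < e by near: e; exact: nbhs_right_gt.
  have b_line := segment_sub_line n_k (relint_segment_sub hb); rewrite /= in b_line.
  have dot_shift c : dot (b + e *: c - p k) (nn k) = e * dot c (nn k).
    have -> : b + e *: c - p k = b - p k + e *: c by vec_ring.
    by rewrite dotDl b_line add0r dotZl.
  move=> q q_seg; have : halfplane (p k) (nn k) q.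
    apply: segment_sub_halfplane q_seg; rewrite /halfplane /= dot_shift.
    - exact: mulr_gt0.
    - by rewrite n_1 mulr1.
  by rewrite /halfplane /= => q_pos /(segment_sub_line n_k) /=; lra.
apply: shifted_segment_avoid; first exact: closed_segment.
move=> q [t [_ ->]]; rewrite (_ : _ + _ = b); last by vec_ring.
exact: (relint_not_edge hP hk hk' (elimN eqP k'k) hb).
Unshelve. all: by end_near.
Qed.

Lemma near_side (S : R -> set V) k b v : (1 <= k <= n)%N -> relint_segment (p k.-1) (p k) b ->
  0 < dot v (nn k) -> (forall e, connected (S e)) ->
  (\forall e \near 0^'+, S e `<=` ~` P /\ S e (b + e *: v)) ->
  \forall e \near 0^'+, S e `<=` side P Q.
Proof.
move=> hk hb vn S_conn S_near; near=> e.
have [S_avoid S_bv] : S e `<=` ~` P /\ S e (b + e *: v) by near: e.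
have T_avoid : segment (b + e *: v) (b + e *: nn k) `<=` ~` P.
  by near: e; exact: normal_segment_avoid.
have bn_side : side P Q (b + e *: nn k) by near: e; exact: near_edge_side.
have T_side : segment (b + e *: v) (b + e *: nn k) `<=` side P Q.
  exact: connected_sub_side (connected_segment _ _) T_avoid (segment_end _ _) bn_side.
exact: connected_sub_side (S_conn e) S_avoid S_bv (T_side _ (segment_start _ _)).
Unshelve. all: by end_near.
Qed.

Lemma incoming_segment_side i b v : (1 <= i <= n)%N -> coherent_at n p nn i ->
  relint_segment (p i.-1) (p i) b -> 0 < dot v (nn i) ->
  \forall e \near 0^'+, segment (b + e *: v) (p i + e *: (nn i + nn (succ i))) `<=` side P Q.
Proof.
move=> hi ci hb vn; apply: (near_side hi hb vn) => [e|]; first exact: connected_segment.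
have nj := normal_at_succ hP hi (normal (succ_range hP hi)).
apply: filterS (incoming_segment_avoid hP hi (normal hi) nj ci hb vn) => e avoid.
by split => //; exact: segment_start.
Qed.

Lemma shifted_edge_side i : (1 <= i <= n)%N -> coherent_at n p nn i -> coherent_at n p nn (succ i) ->
  \forall e \near 0^'+, segment (p i + e *: (nn i + nn (succ i)))
                         (p (succ i) + e *: (nn (succ i) + nn (succ (succ i)))) `<=` side P Q.
Proof.
move=> hi ci cj; have hj := succ_range hP hi; have hl := succ_range hP hj.
have unf_i := coherent_at_unfolded hP hi (normal hi) (normal hj) ci.
have unf_j := coherent_at_unfolded hP hj (normal hj) (normal hl) cj.
have := shifted_edge_avoid hP hi (normal hi) (normal hj) (normal hl) ci cj.
have pj := p_pred_succ hP hi.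
set j := succ i in hj unf_i unf_j cj pj *; set l := succ j in hl unf_j *.
set v := (1 - 2^-1) *: (nn i + nn j) + 2^-1 *: (nn j + nn l).
have hm := midpoint_relint (p j.-1) (p j).
have vn : 0 < dot v (nn j).
  have [nj_1 _] := normal hj.
  rewrite /v !dotLE nj_1 (dotC (nn l)) (_ : 1 - 2^-1 = 2^-1 :> R); last by field.
  nra.
move=> avoid; apply: (near_side hj hm vn) => [e|]; first exact: connected_segment.
apply: filterS avoid => e avoid; split => //.
exists 2^-1; split; last by rewrite /v pj; vec_ring.
by apply/andP; split; [rewrite invr_ge0 | rewrite invf_le1 ?ler1n].
Qed.
End PolygonSides.

Lemma outward_normals_coherent (R : realType) n (p u : nat -> 'rV[R]_2) :
  simple_closed_polygon n p ->
  (forall k, (1 <= k <= n)%N -> normal_at p u k) ->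
  (forall k, (1 <= k <= n)%N -> forall b, relint_segment (p k.-1) (p k) b ->
    \forall e \near 0^'+, poly_ext (polygon n p) (b + e *: u k) /\
                          poly_int (polygon n p) (b - e *: u k)) ->
  forall i, (1 <= i <= n)%N -> coherent_at n p u i.
Proof.
move=> hP normal sides i hi; have hj := succ_range hP hi.
have ni := normal i hi; have nj := normal_at_succ hP hi (normal _ hj).
have ij : p i <> p (succ_mod n i) by have := edge_ends_neq hP hj; rewrite p_pred_succ.
have ci : dot (p i - p i.-1) (rot (u i)) != 0.
  apply: (unit_normal_rot_neq0 ni) => /subr0_eq /esym.
  exact: (edge_ends_neq hP hi).
have cj : dot (p (succ_mod n i) - p i) (rot (u (succ_mod n i))) != 0.
  by apply: (unit_normal_rot_neq0 nj) => /subr0_eq /esym.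
rewrite /coherent_at /coherent lt_neqAle eq_sym mulf_neq0 //=.
rewrite leNgt; apply/negP => flipped.
have coh : coherent (p i - p i.-1) (u i) (p (succ_mod n i) - p i) (- u (succ_mod n i)).
  by rewrite /coherent rotN dotNr mulrN oppr_gt0.
have ui_pos : 0 < dot (u i) (u i) by rewrite ni.1.
have uj_pos : 0 < dot (- u (succ_mod n i)) (- u (succ_mod n i)) by rewrite dotNl dotNr opprK nj.1.
have A1 := incoming_segment_avoid hP hi ni (unit_normalN nj) coh (midpoint_relint _ _) ui_pos.
have A2 := outgoing_segment_avoid hP hi ni (unit_normalN nj) coh (midpoint_relint _ _) uj_pos.
have S1 := sides i hi _ (midpoint_relint (p i.-1) (p i)).
have S2 := sides _ hj _ (midpoint_relint (p (succ_mod n i).-1) (p (succ_mod n i))).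
rewrite p_pred_succ // in S2.
have [e [[avoid1 avoid2] [[ext1 _] [_ int2]]]] :=
  filter_ex (filterI (filterI A1 A2) (filterI S1 S2)).
have ext_mid := connected_sub_side (Q := fun C => ~ bounded_set C)
  (connected_segment _ _) avoid1 (segment_start _ _) ext1.
have ext2 := connected_sub_side (connected_segment _ _) avoid2 (segment_start _ _)
  (ext_mid _ (segment_end _ _)).
by case: (ext2 _ (segment_end _ _)) => _; rewrite scalerN; case: int2.
Qed.

Theorem lemma3p2 (R : realType) (n : nat) (p u : nat -> 'rV[R]_2) :
  simple_closed_polygon n p ->
  (forall k, u (k + n)%N = u k) ->
  (forall i, (1 <= i <= n)%N ->
     [/\ dot (u i) (u i) = 1,
         dot (u i) (p i - p i.-1) = 0 &
         forall b, relint_segment (p i.-1) (p i) b ->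
           exists d : R, 0 < d /\ forall e : R, 0 < e < d ->
             poly_ext (polygon n p) (b + e *: u i) /\
             poly_int (polygon n p) (b - e *: u i)]) ->
  (forall i, (1 <= i <= n)%N ->
   forall (b v : 'rV[R]_2), relint_segment (p i.-1) (p i) b -> 0 < dot v (u i) ->
   exists d : R, 0 < d /\ forall e : R, 0 < e < d ->
     segment (b + e *: v) (p i + e *: (u i + u i.+1)) `<=` poly_ext (polygon n p) /\
     segment (b - e *: v) (p i - e *: (u i + u i.+1)) `<=` poly_int (polygon n p))
  /\
  (forall i, (1 <= i <= n)%N ->
   exists d : R, 0 < d /\ forall e : R, 0 < e < d ->
     segment (p i + e *: (u i + u i.+1)) (p i.+1 + e *: (u i.+1 + u i.+2))
       `<=` poly_ext (polygon n p) /\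
     segment (p i - e *: (u i + u i.+1)) (p i.+1 - e *: (u i.+1 + u i.+2))
       `<=` poly_int (polygon n p)).
Proof.
move=> hP u_periodic outward.
have normal k : (1 <= k <= n)%N -> normal_at p u k by case/outward.
have sides k : (1 <= k <= n)%N -> forall b, relint_segment (p k.-1) (p k) b ->
    \forall e \near 0^'+, poly_ext (polygon n p) (b + e *: u k) /\
                          poly_int (polygon n p) (b - e *: u k).
  by case/outward => _ _ hb b /hb /near_right0P.
have coh := outward_normals_coherent hP normal sides.
have ext_side k : (1 <= k <= n)%N -> forall b, relint_segment (p k.-1) (p k) b ->
    \forall e \near 0^'+, side (polygon n p) (fun C => ~ bounded_set C) (b + e *: u k).
  by move=> hk b hb; apply: filterS (sides k hk b hb) => e [].
have int_side k : (1 <= k <= n)%N -> forall b, relint_segment (p k.-1) (p k) b ->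
    \forall e \near 0^'+, side (polygon n p) bounded_set (b + e *: (fun k => - u k) k).
  by move=> hk b hb; apply: filterS (sides k hk b hb) => e [_]; rewrite scalerN.
have normalN k (hk : (1 <= k <= n)%N) := normal_atN (normal k hk).
have cohN i (hi : (1 <= i <= n)%N) := coherent_atN (coh i hi).
have u1 i hi := succ_mod_periodic (f := u) (i := i) hi u_periodic.
have p1 i hi := succ_mod_periodic (f := p) (i := i) hi (p_periodic hP).
have u2 i hi := succ_mod2_periodic (f := u) (i := i) (ltn_trans (ltnSn 1) (n_ge3 hP)) hi u_periodic.
have opp_shift (x w : 'rV[R]_2) e : x - e *: w = x + e *: - w by rewrite scalerN.
split=> i hi.
- move=> b v hb vn; apply/near_right0P; rewrite -(u1 _ hi).
  have ext := incoming_segment_side hP normal ext_side hi (coh i hi) hb vn.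
  have vnN : 0 < dot (- v) (- u i) by rewrite dotNl dotNr opprK.
  have int := incoming_segment_side hP normalN int_side hi (cohN i hi) hb vnN.
  by near=> e; rewrite !opp_shift opprD; split; near: e.
- apply/near_right0P; rewrite -(u1 _ hi) -(u2 _ hi) -(p1 _ hi).
  have hj := succ_range hP hi.
  have ext := shifted_edge_side hP normal ext_side hi (coh i hi) (coh _ hj).
  have int := shifted_edge_side hP normalN int_side hi (cohN i hi) (cohN _ hj).
  by near=> e; rewrite !opp_shift !opprD; split; near: e.
Unshelve. all: by end_near.
Qed.
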